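(* Let $G\neq 1$ be a finite solvable group. Then $G$ satisfies $\mathcal{H}_{\mathrm{r}(G)}$. In particular, if $p$ is a prime and $G$ is a $p$-group with $|G/\Phi(G)|=p^2$, then $G$ satisfies $\mathcal{H}_2$.
   Context: For a positive integer $k$, a finite group $G$ satisfies property $\mathcal{H}_k$ if there exists a set $\mathcal{C}$ of conjugacy classes of $G$ with $|\mathcal{C}|\le k$ such that every non-linear ($\chi(1)>1$) irreducible complex character of $G$ vanishes (takes the value $0$) on at least one class in $\mathcal{C}$. For $G$ solvable, the Fitting series is defined by $\mathbf{F}_0(G)=1$, $\mathbf{F}_1(G)=\mathbf{F}(G)$ (the Fitting subgroup), and $\mathbf{F}_i(G)/\mathbf{F}_{i-1}(G)=\mathbf{F}(G/\mathbf{F}_{i-1}(G))$ for $i\ge 2$; the Fitting height $\mathrm{h}(G)$ is the least $h$ with $\mathbf{F}_h(G)=G$. For $1\le i\le \mathrm{h}(G)$, $\mathrm{r}_i(G)$ is the minimum size of a generating set of $\mathbf{F}_i(G)/\mathbf{F}_{i-1}(G)$, and $\mathrm{r}(G)=\sum_{i=1}^{\mathrm{h}(G)}\mathrm{r}_i(G)$. $\Phi(G)$ denotes the Frattini subgroup. *)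

From HB Require Import structures.
From mathcomp Require Import all_boot all_order all_algebra all_fingroup all_solvable all_field all_character.
Set Implicit Arguments. Unset Strict Implicit. Unset Printing Implicit Defensive.
Import Order.TTheory GRing.Theory Num.Theory.
Local Open Scope group_scope.

Definition satisfies_H (gT : finGroupType) (G : {group gT}) (k : nat) : Prop :=
  exists C : {set {set gT}},
    [/\ C \subset classes G, #|C| <= k &
        forall i : Iirr G, (1 < ('chi[G]_i)%R 1%g)%R ->
          exists2 K, K \in C & forall x, x \in K -> ('chi[G]_i)%R x = 0%R].

Fixpoint Fitting_series (gT : finGroupType) (G : {group gT}) (i : nat)
  : {group gT} :=
  match i with
  | 0 => 1%G
  | i'.+1 => (coset (Fitting_series G i') @*^-1 'F(G / Fitting_series G i'))%G
  end.

Lemma gen_rank_ex (gT : finGroupType) (A : {group gT}) :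
  exists n, [exists X : {set gT}, (#|X| == n) && (<<X>> == A)].
Proof. exists #|A|; apply/existsP; exists (A : {set gT}); by rewrite eqxx genGid eqxx. Qed.

Definition gen_rank (gT : finGroupType) (A : {group gT}) : nat :=
  ex_minn (gen_rank_ex A).

Definition fitting_r (gT : finGroupType) (G : {group gT}) (i : nat) : nat :=
  gen_rank (Fitting_series G i / Fitting_series G i.-1)%G.

From Pilot Require Import Defs.
From HB Require Import structures.
From mathcomp Require Import all_boot all_order all_algebra all_fingroup all_solvable all_field all_character.
From mathcomp Require Import zify.
Set Implicit Arguments. Unset Strict Implicit. Unset Printing Implicit Defensive.
Import Order.TTheory GRing.Theory Num.Theory.
Local Open Scope group_scope.
Local Open Scope ring_scope.

(* Let L <| H with H/L nilpotent and let X generate H modulo L.  A nonlinear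
   irreducible character chi of H vanishes on X, or wherever the nonlinear
   irreducible constituent theta of chi_L does.  Indeed, if theta is not
   H-invariant, its inertia group lies in a proper normal subgroup M of H
   (H/L is nilpotent), chi is induced from it and so vanishes off M, while X
   is not contained in M.  If theta is invariant, chi_L = e theta; when theta
   is linear, L <= Z(chi), and an element y outside Z(chi) that is central
   modulo Z(chi) satisfies [x, y] in ker chi whenever chi(x) <> 0, so chi
   cannot be nonzero on all of X.  Running up the Fitting series, lifting a
   minimal generating set of each factor, yields r(G) elements whose classes
   witness H_r(G); for a p-group, lifts of two generators of G/Phi(G)
   generate G. *)

Section NonlinearIrr.

Variables (gT : finGroupType) (H : {group gT}).

Lemma abelian_irr1_le1 (i : Iirr H) : abelian H -> ~~ (1 < 'chi_i 1%g).
Proof. by move/char_abelianP/(_ i)/lin_char1->; rewrite ltxx. Qed.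

Lemma nonlinear_irr_cfcenter_proper (i : Iirr H) :
  1 < 'chi_i 1%g -> ~~ (H \subset 'Z('chi_i)%CF).
Proof.
apply: contraL => sHZ.
have eZH : 'Z('chi_i)%CF = H by apply/eqP; rewrite eqEsubset sHZ cfcenter_sub.
have [le_chi2_1 _] := irr1_bound i; move: le_chi2_1.
rewrite eZH indexgg irr1_degree -natrX ler_nat => le_d2_1.
by rewrite ltr1n -leqNgt; nia.
Qed.

Lemma irr_commg_cfker (i : Iirr H) (x y : gT) :
  x \in H -> y \in H -> [~ x, y] \in 'Z('chi_i)%CF -> 'chi_i x != 0 ->
  [~ x, y] \in cfker 'chi_i.
Proof.
move=> Hx Hy; set z := [~ x, y].
rewrite -irrRepr cfker_repr cfcenter_repr !inE.
case/andP=> Hz /is_scalar_mxP[c Chi_z] nz_chi_x; rewrite Hz Chi_z mul1mx /=.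
apply/eqP; congr _%:M; apply: (mulIf nz_chi_x); rewrite mul1r.
rewrite -{2}(cfunJ _ x Hy) conjg_mulR -/z !cfunE Hx groupM // !{1}mulrb.
by rewrite repr_mxM // Chi_z mul_mx_scalar mxtraceZ.
Qed.

End NonlinearIrr.

Section CfkerCentraliser.

Variables (gT : finGroupType) (H : {group gT}) (i : Iirr H) (y : gT).
Hypothesis Hy : y \in H.

Local Notation K := (cfker 'chi[H]_i).
Local Notation C := (H :&: coset K @*^-1 'C[coset K y])%G.

Lemma cfker_commg_cent g : g \in H -> [~ g, y] \in K -> g \in C.
Proof.
move=> Hg gyK; have nKH := normal_norm (cfker_normal 'chi_i).
have Ng := subsetP nKH g Hg; have Ny := subsetP nKH y Hy.
rewrite inE Hg /=; apply/morphpreP; split=> //.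
by apply/cent1P/commgP; rewrite -morphR //; apply/eqP/coset_id.
Qed.

Lemma cfcenter_sub_cfker_cent : 'Z('chi_i)%CF \subset C.
Proof.
apply/subsetP=> z Zz; have nKH := normal_norm (cfker_normal 'chi_i).
have Hz := subsetP (cfcenter_sub 'chi_i) z Zz.
have Nz := subsetP nKH z Hz; have Ny := subsetP nKH y Hy.
apply: cfker_commg_cent => //; apply: coset_idr; first by rewrite groupR.
rewrite morphR //; apply/eqP/commgP.
have : coset K z \in 'Z(H / K)%g.
  by apply: (subsetP (cfcenter_subset_center 'chi_i)); rewrite mem_quotient.
by case/setIP=> _ /centP; apply; rewrite mem_quotient.
Qed.

Lemma cfker_cent_cfcenter : H \subset C -> y \in 'Z('chi_i)%CF.
Proof.
move=> sHC; have Ny := subsetP (normal_norm (cfker_normal 'chi_i)) y Hy.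
have : coset K y \in 'Z(H / K)%g.
  rewrite inE mem_quotient //=; apply/centP=> _ /morphimP[g Ng Hg ->].
  by have /setIP[_ /morphpreP[_ /cent1P]] := subsetP sHC g Hg.
rewrite -cfcenter_eq_center => /morphimP[z Nz Zz].
move/(rcoset_kercosetP Ny Nz) => /rcosetP[k Kk ->].
by rewrite groupM // (subsetP (normal_sub (cfker_center_normal 'chi_i))).
Qed.

End CfkerCentraliser.

Lemma cfcenter_irr_vanishes_on_gen (gT : finGroupType) (H L : {group gT})
    (X : {set gT}) (i : Iirr H) :
  L <| H -> nilpotent (H / L)%g -> X \subset H -> H \subset <<X :|: L>>%g ->
  L \subset 'Z('chi_i)%CF -> 1 < 'chi_i 1%g ->
  exists2 x, x \in X & 'chi_i x = 0.
Proof.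
move=> nsLH nilHL sXH genH sLZ chi1.
set chi := 'chi_i in chi1 *; set Z := 'Z(chi)%CF in sLZ *.
have nsZH : Z <| H := cfcenter_normal chi.
have nilHZ : nilpotent (H / Z)%g.
  by rewrite -(isog_nil (third_isog sLZ nsLH nsZH)) quotient_nil.
have ntHZ : (H / Z)%g != 1%g.
  by rewrite -subG1 quotient_sub1 ?normal_norm ?nonlinear_irr_cfcenter_proper.
(* y is central modulo Z(chi) but not in Z(chi); the elements of H on which chi
   does not vanish centralise y modulo ker chi, so they cannot generate H. *)
have : 'Z(H / Z)%g != 1%g by rewrite center_nil_eq1.
case/trivgPn=> _ /setIP[/morphimP[y Ny Hy ->] cy] ny1.
have yZ : y \notin Z by apply: contra ny1 => Zy; rewrite /= coset_id.
have commZ g : g \in H -> [~ g, y] \in Z.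
  move=> Hg; have Ng := subsetP (normal_norm nsZH) g Hg.
  apply: coset_idr; first by rewrite groupR.
  rewrite morphR //; apply/eqP/commgP/commute_sym.
  by apply: (centP cy); rewrite mem_quotient.
have [/exists_inP[x Xx /eqP chi_x0] | ] := boolP [exists x in X, chi x == 0].
  by exists x.
rewrite negb_exists_in => /forall_inP nz_chi; case/negP: yZ.
apply: cfker_cent_cfcenter => //; apply: subset_trans genH _.
rewrite gen_subG subUset (subset_trans sLZ (cfcenter_sub_cfker_cent i Hy)) andbT.
apply/subsetP=> x Xx; have Hx := subsetP sXH x Xx.
by rewrite cfker_commg_cent ?irr_commg_cfker ?commZ ?nz_chi.
Qed.

Lemma nil_quotient_proper_normal (gT : finGroupType) (H L T : {group gT}) :
  L <| H -> nilpotent (H / L)%g -> L \subset T -> T \proper H ->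
  exists2 M : {group gT}, M <| H /\ M \proper H & T \subset M.
Proof.
move=> nsLH nilHL sLT prTH.
have [M /maxgroupP[prMH maxM] sTM] :=
  @maxgroup_exists _ (fun M : {group gT} => M \proper H) T prTH.
exists M => //; split=> //.
have sMH := proper_sub prMH; rewrite /normal sMH /=.
apply/negPn/negP => nHM.
have prN : 'N_H(M) \proper H.
  by rewrite properEneq subsetIl andbT; apply: contra nHM => /eqP <-; apply: subsetIr.
have eN : 'N_H(M) = M by apply: (maxM [group of 'N_H(M)]); rewrite // subsetI sMH normG.
have nsLM : L <| M := normalS (subset_trans sLT sTM) sMH nsLH.
have prMHL : (M / L)%g \proper (H / L)%g by rewrite quotient_proper.
have := nilpotent_proper_norm nilHL prMHL.
by rewrite -quotient_subnormG // eN properxx.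
Qed.

Section CliffordVanishing.

Variables (gT : finGroupType) (H L : {group gT}) (X : {set gT}).
Hypotheses (nsLH : L <| H) (nilHL : nilpotent (H / L)%g).
Hypotheses (sXH : X \subset H) (genH : H \subset <<X :|: L>>%g).

Lemma irr_vanishes_on_gen_noninvariant (i : Iirr H) (t : Iirr L) :
  t \in irr_constt ('Res[L] 'chi_i) -> ~~ (H \subset 'I_H['chi_t]) ->
  exists2 x, x \in X & 'chi_i x = 0.
Proof.
move=> tc ninv; set T := 'I_H['chi_t]%G.
have sTH : T \subset H := Inertia_sub H 'chi_t.
have prTH : T \proper H by rewrite properE sTH.
have sLT : L \subset T := sub_Inertia 'chi_t (normal_sub nsLH).
have [M [nsMH prMH] sTM] := nil_quotient_proper_normal nsLH nilHL sLT prTH.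
have [irrInd _ imInd _ _] := constt_Inertia_bijection t nsLH.
have : i \in irr_constt ('Ind[H] 'chi_t) by rewrite constt_Ind_Res.
rewrite -imInd => /imsetP[s sT ->].
rewrite /Ind_Iirr cfIirrE ?irrInd //.
have IndM0 x : x \in H -> x \notin M -> 'Ind[H] 'chi_s x = 0.
  move=> Hx Mx; rewrite cfIndE // big1 ?mulr0 // => y Hy.
  apply: cfun0; apply: contra Mx => Txy.
  by rewrite -(memJ_norm x (subsetP (normal_norm nsMH) y Hy)) (subsetP sTM).
have [/exists_inP[x Xx Mx] | ] := boolP [exists x in X, x \notin M].
  by exists x; rewrite // IndM0 ?(subsetP sXH).
rewrite negb_exists_in => /forall_inP sXM; exfalso.
move/proper_subn: prMH => /negP; apply; apply: subset_trans genH _.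
rewrite gen_subG subUset (subset_trans sLT sTM) andbT.
by apply/subsetP=> x /sXM; rewrite negbK.
Qed.

Lemma cfRes_invariant_constt (i : Iirr H) (t : Iirr L) :
  t \in irr_constt ('Res[L] 'chi_i) -> H \subset 'I_H['chi_t] ->
  'Res[L] 'chi_i = '['Res[L] 'chi_i, 'chi_t] *: 'chi_t.
Proof.
move=> tc inv; rewrite {1}(Clifford_Res_sum_cfclass nsLH tc).
by rewrite (cfclass_invariant (subset_trans inv (subsetIr _ _))) /seq_of_cfun big_seq1.
Qed.

Lemma invariant_lin_constt_cfcenter (i : Iirr H) (t : Iirr L) :
  t \in irr_constt ('Res[L] 'chi_i) -> H \subset 'I_H['chi_t] ->
  'chi_t \is a linear_char -> L \subset 'Z('chi_i)%CF.
Proof.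
move=> tc inv lin_t; have sLH := normal_sub nsLH.
have Ne : '['Res[L] 'chi_i, 'chi_t] \in Num.nat.
  by rewrite Cnat_cfdot_char ?cfRes_char ?irr_char.
apply/subsetP => l Ll; rewrite irr_cfcenterE ?(subsetP sLH) //.
rewrite -!(cfResE _ sLH) ?group1 // (cfRes_invariant_constt tc inv) !cfunE.
by rewrite normrM normC_lin_char // lin_char1 // ger0_norm ?natr_ge0.
Qed.

Lemma nonlinear_irr_vanishes_on_gen_ext (Y : {set gT}) :
  Y \subset L ->
  (forall t : Iirr L, 1 < 'chi_t 1%g -> exists2 y, y \in Y & 'chi_t y = 0) ->
  forall i : Iirr H, 1 < 'chi_i 1%g -> exists2 x, x \in X :|: Y & 'chi_i x = 0.
Proof.
move=> sYL vanishL i chi1; have sLH := normal_sub nsLH.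
have [t tc] := constt_cfRes_irr L i.
have [inv | ninv] := boolP (H \subset 'I_H['chi_t]); last first.
  by have [x Xx chix0] := irr_vanishes_on_gen_noninvariant tc ninv; exists x; rewrite ?inE ?Xx.
have [t1 | t_le1] := boolP (1 < 'chi_t 1%g).
  have [y Yy chity0] := vanishL t t1; exists y; first by rewrite inE Yy orbT.
  have Ly := subsetP sYL y Yy.
  by rewrite -(cfResE _ sLH Ly) (cfRes_invariant_constt tc inv) cfunE chity0 mulr0.
have lin_t : 'chi_t \is a linear_char.
  rewrite qualifE/= irr_char /=; move: t_le1; rewrite irr1_degree ltr1n pnatr_eq1.
  by have := irr1_gt0 t; rewrite irr1_degree ltr0n; lia.
have sLZ := invariant_lin_constt_cfcenter tc inv lin_t.
have [x Xx chix0] := cfcenter_irr_vanishes_on_gen nsLH nilHL sXH genH sLZ chi1.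
by exists x; rewrite ?inE ?Xx.
Qed.

End CliffordVanishing.

Lemma nil_irr_vanishes_on_gen (gT : finGroupType) (G : {group gT}) (X : {set gT}) :
  nilpotent G -> <<X>>%g = G ->
  forall i : Iirr G, 1 < 'chi_i 1%g -> exists2 x, x \in X & 'chi_i x = 0.
Proof.
move=> nilG genX i chi1; have sXG : X \subset G by rewrite -genX subset_gen.
have genG : G \subset <<X :|: 1%G>>%g by rewrite -{1}genX genS ?subsetUl.
have vanish1 (t : Iirr [1 gT]%G) : 1 < 'chi_t 1%g -> exists2 y, y \in set0 & 'chi_t y = 0.
  by rewrite (negPf (abelian_irr1_le1 t (abelian1 _))).
have [x] := nonlinear_irr_vanishes_on_gen_ext (normal1 G) (quotient_nil _ nilG)
  sXG genG (sub0set _) vanish1 chi1.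
by rewrite setU0; exists x.
Qed.

Lemma satisfies_H_vanishing_set (gT : finGroupType) (G : {group gT}) (Y : {set gT}) k :
  Y \subset G -> (#|Y| <= k)%N ->
  (forall i : Iirr G, 1 < 'chi_i 1%g -> exists2 y, y \in Y & 'chi_i y = 0) ->
  satisfies_H G k.
Proof.
move=> sYG leYk vanishY; exists [set y ^: G | y in Y]%g; split.
- by apply/subsetP=> _ /imsetP[y Yy ->]; rewrite mem_classes ?(subsetP sYG).
- exact: leq_trans (leq_imset_card _ _) leYk.
- move=> i /vanishY[y Yy chiy0]; exists (y ^: G)%g; first exact: imset_f.
  by move=> x /imsetP[g Gg ->]; rewrite cfunJ.
Qed.

Lemma gen_rank_spec (gT : finGroupType) (A : {group gT}) :
  exists2 S : {set gT}, #|S| = Defs.gen_rank A & <<S>>%g = A.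
Proof.
rewrite /Defs.gen_rank; case: (ex_minnP (gen_rank_ex A)) => n /existsP[S /andP[/eqP cS /eqP gS]] _.
by exists S.
Qed.

Lemma quotient_gen_lift (gT : finGroupType) (K F : {group gT}) (S : {set coset_of K}) :
  K <| F -> <<S>>%g = (F / K)%g ->
  exists X : {set gT}, [/\ X \subset F, (#|X| <= #|S|)%N & F \subset <<X :|: K>>%g].
Proof.
move=> nsKF genSQ; have [sKF nKF] := andP nsKF.
have sSFK : S \subset (F / K)%g by rewrite -genSQ subset_gen.
pose X := [set repr Kx | Kx : coset_of K in S].
have sXF : X \subset F.
  apply/subsetP=> _ /imsetP[Kx Sx ->].
  rewrite -(quotientGK nsKF); apply/morphpreP; split; first exact: repr_coset_norm.
  by rewrite /= coset_reprK (subsetP sSFK).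
exists X; split=> //; first exact: leq_imset_card.
set W := <<_ :|: _>>%g.
have sWF : W \subset F by rewrite gen_subG subUset sXF sKF.
have nsKW : K <| W := normalS (sub_gen (subsetUr _ _)) sWF nsKF.
apply: (@subset_trans _ _ (coset K @*^-1 (W / K))%g); last by rewrite quotientGK.
rewrite -{1}(quotientGK nsKF) morphpreS // -genSQ gen_subG.
apply/subsetP=> Kx Sx; rewrite -[Kx]coset_reprK mem_quotient // mem_gen //.
by apply/setUP; left; apply: imset_f.
Qed.

Lemma Fitting_series_step (gT : finGroupType) (G : {group gT}) j :
  Fitting_series G j <| Fitting_series G j.+1 /\
  nilpotent (Fitting_series G j.+1 / Fitting_series G j)%g.
Proof. by split; [apply: normal_cosetpre | rewrite /= cosetpreK Fitting_nil]. Qed.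

Lemma Fitting_series_vanishing_set (gT : finGroupType) (G : {group gT}) j :
  exists Y : {set gT}, [/\ Y \subset Fitting_series G j,
    (#|Y| <= \sum_(1 <= k < j.+1) fitting_r G k)%N &
    forall t : Iirr (Fitting_series G j), 1 < 'chi_t 1%g ->
      exists2 y, y \in Y & 'chi_t y = 0].
Proof.
elim: j => [|j [Y [sYF leY vanishY]]].
  exists set0; split; rewrite ?sub0set ?cards0 // => t.
  by rewrite (negPf (abelian_irr1_le1 t (abelian1 _))).
have [nsFj nilFj] := Fitting_series_step G j.
have [S cardS genSQ] := gen_rank_spec (Fitting_series G j.+1 / Fitting_series G j)%G.
have [X [sXF leX genF]] := quotient_gen_lift nsFj genSQ.
exists (X :|: Y); split.
- by rewrite subUset sXF (subset_trans sYF (normal_sub nsFj)).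
- rewrite big_nat_recr //= addnC; apply: leq_trans (leq_card_setU _ _) _.
  by rewrite leq_add // /fitting_r -cardS.
- exact: (nonlinear_irr_vanishes_on_gen_ext nsFj nilFj sXF genF sYF vanishY).
Qed.

Lemma p2group_two_gen (gT : finGroupType) (p : nat) (Q : {group gT}) :
  prime p -> p.-group Q -> #|Q| = (p ^ 2)%N ->
  exists2 S : {set gT}, (#|S| <= 2)%N & <<S>>%g = Q.
Proof.
move=> p_pr pQ oQ; have p_gt1 := prime_gt1 p_pr.
have ntQ : Q :!=: 1%g by rewrite -cardG_gt1 oQ (ltn_exp2l 0).
have [a Qa a1] := trivgPn _ ntQ.
have [sQa | /subsetPn[b Qb aNb]] := boolP (Q \subset <[a]>%g).
  exists [set a]; first by rewrite cards1.
  by apply/eqP; rewrite eqEsubset sQa cycle_subG Qa.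
exists [set a; b]; first by rewrite cards2; case: (a != b).
set W := <<[set a; b]>>%g.
have sWQ : W \subset Q by rewrite gen_subG; apply/subsetP=> x /set2P[]->.
have prAW : <[a]>%g \proper W.
  rewrite properE cycle_subG mem_gen ?set21 //=.
  by apply/subsetPn; exists b; rewrite // mem_gen ?set22.
(* a chain 1 < <[a]> < W <= Q of p-groups forces #|W| = p^2 *)
have [k1 oA] := p_natP (pgroupS (proper_sub (proper_sub_trans prAW sWQ)) pQ).
have [k2 oW] := p_natP (pgroupS sWQ pQ).
have : (1 < #|<[a]>%g|)%N by rewrite -orderE order_gt1.
have := proper_card prAW; rewrite oA oW -{1}(expn0 p) !ltn_exp2l // => k12 k1_gt0.
apply/eqP; rewrite eqEcard sWQ oQ oW leq_exp2l //.
exact: leq_trans k12.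
Qed.

Local Close Scope ring_scope.

Theorem theorem3 :
  (forall (gT : finGroupType) (G : {group gT}),
      solvable G -> G :!=: 1 ->
      forall h : nat,
        Fitting_series G h = G ->
        (forall j, j < h -> Fitting_series G j != G) ->
        satisfies_H G (\sum_(1 <= i < h.+1) fitting_r G i)) /\
  (forall (gT : finGroupType) (p : nat) (G : {group gT}),
      prime p -> p.-group G -> #|G / 'Phi(G)| = (p ^ 2)%N ->
      satisfies_H G 2).
Proof.
(* Only F_h(G) = G is needed, not solvability or the minimality of h. *)
split=> [gT G _ _ h Fh _ | gT p G p_pr pG oGPhi].
  have [Y] := Fitting_series_vanishing_set G h; rewrite Fh => -[sYG leY vanishY].
  exact: satisfies_H_vanishing_set sYG leY vanishY.
have [S leS2 genSQ] := p2group_two_gen p_pr (quotient_pgroup _ pG) oGPhi.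
have [X [sXG leXS genG]] := quotient_gen_lift (Phi_normal G) genSQ.
have genX : <<X>> = G.
  apply: Phi_nongen; apply/eqP; rewrite eqEsubset gen_subG subUset Phi_sub sXG.
  by rewrite (subset_trans genG) // genS // setUC.
apply: satisfies_H_vanishing_set sXG (leq_trans leXS leS2) _.
exact: nil_irr_vanishes_on_gen (pgroup_nil pG) genX.
Qed.
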